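(* Let $\mathfrak L_1,\dots,\mathfrak L_n,\mathfrak L$ be complete lattices and $(\mathcal F_\alpha)_{\alpha\in\mathcal O}$ with $\mathcal F_\alpha:\mathfrak L_1\times\dots\times\mathfrak L_n\to(\mathfrak L\to^+\mathfrak L)$ a family which is $\liminf$-pullable in all arguments. Then (1) for every $\beta\in\mathcal O$, the family $\vec{\mathcal G}\mapsto\mu^\beta(\mathcal F_\alpha(\vec{\mathcal G}))$ $(\alpha\in\mathcal O)$ is $\liminf$-pullable; (2) for every monotone $f:\mathfrak L\to\mathfrak L$, every $\phi:\mathcal O\to\mathcal O$ and every nonzero limit ordinal $\lambda\in\mathcal O$, writing $\mu^\alpha$ for $\mu^\alpha f$: $\mu^{\liminf_\lambda\phi}=\liminf_{\alpha\to\lambda}\mu^{\phi(\alpha)}$.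
   Context: $\mathcal O$ is the set of ordinals $\le\top_{\mathsf{ord}}$ for a fixed ordinal $\top_{\mathsf{ord}}$ ($=\beth_\omega$). For $g:\mathcal O\to\mathfrak L$ into a complete lattice and a nonzero limit $\lambda$: $\liminf_\lambda g=\liminf_{\alpha\to\lambda}g(\alpha)=\sup_{\alpha_0<\lambda}\inf_{\alpha_0\le\alpha<\lambda}g(\alpha)$, $\limsup_{\alpha\to\lambda}g(\alpha)=\inf_{\alpha_0<\lambda}\sup_{\alpha_0\le\alpha<\lambda}g(\alpha)$; on products, componentwise. $\mathfrak L\to^+\mathfrak L$ = monotone maps. For $f:\mathfrak L\to\mathfrak L$, $g\in\mathfrak L$: $f^0(g)=g$, $f^{\alpha+1}(g)=f(f^\alpha(g))$, $f^\lambda(g)=\limsup_{\alpha\to\lambda}f^\alpha(g)$; $\mu^\alpha f:=f^\alpha(\bot)$. A family $(\mathcal F_\alpha)_{\alpha\in\mathcal O}$ of maps $\mathfrak K\to\mathfrak K'$ is $\liminf$-pullable if for all $\mathcal G:\mathcal O\to\mathfrak K$ and nonzero limits $\lambda$: $\mathcal F_\gamma(\liminf_{\alpha\to\lambda}\mathcal G_\alpha)\sqsubseteq\liminf_{\alpha\to\lambda}\mathcal F_\gamma(\mathcal G_\alpha)$ for all $\gamma\in\mathcal O$, and $\mathcal F_\lambda(\liminf_{\alpha\to\lambda}\mathcal G_\alpha)\sqsubseteq\liminf_{\alpha\to\lambda}\mathcal F_\alpha(\mathcal G_\alpha)$. ''$\liminf$-pullable in all arguments'' means the family $(\vec{\mathcal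 G},\mathcal X)\mapsto\mathcal F_\alpha(\vec{\mathcal G})(\mathcal X)$ is $\liminf$-pullable. *)

From Stdlib Require Import Classical ClassicalEpsilon.

Set Implicit Arguments.

Record CompleteLattice := {
  carrier :> Type;
  le : carrier -> carrier -> Prop;
  le_refl : forall x, le x x;
  le_trans : forall x y z, le x y -> le y z -> le x z;
  le_antisym : forall x y, le x y -> le y x -> x = y;
  sup : (carrier -> Prop) -> carrier;
  sup_ub : forall (S : carrier -> Prop) x, S x -> le x (sup S);
  sup_least : forall (S : carrier -> Prop) y,
      (forall x, S x -> le x y) -> le (sup S) y
}.

Arguments le {c} _ _.
Arguments sup {c} _.

Definition inf {L : CompleteLattice} (S : L -> Prop) : L :=
  sup (fun y => forall x, S x -> le y x).

Definition bot {L : CompleteLattice} : L := sup (fun _ => False).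

Definition monotone {L : CompleteLattice} (f : L -> L) : Prop :=
  forall x y, le x y -> le (f x) (f y).

Section Prod.
Variables A B : CompleteLattice.

Definition prod_le (x y : A * B) : Prop := le (fst x) (fst y) /\ le (snd x) (snd y).
Definition prod_sup (S : A * B -> Prop) : A * B :=
  (sup (fun a => exists b, S (a, b)), sup (fun b => exists a, S (a, b))).

Lemma prod_le_refl x : prod_le x x.
Proof. split; apply le_refl. Qed.
Lemma prod_le_trans x y z : prod_le x y -> prod_le y z -> prod_le x z.
Proof. intros [H1 H2] [H3 H4]; split; eapply le_trans; eauto. Qed.
Lemma prod_le_antisym x y : prod_le x y -> prod_le y x -> x = y.
Proof.
  destruct x as [x1 x2], y as [y1 y2]; intros [H1 H2] [H3 H4]; simpl in *.
  f_equal; apply le_antisym; auto.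
Qed.
Lemma prod_sup_ub (S : A * B -> Prop) x : S x -> prod_le x (prod_sup S).
Proof.
  destruct x as [x1 x2]; intros H; split; simpl; apply sup_ub; eauto.
Qed.
Lemma prod_sup_least (S : A * B -> Prop) y :
  (forall x, S x -> prod_le x y) -> prod_le (prod_sup S) y.
Proof.
  intros H; split; simpl; apply sup_least.
  - intros a [b Hb]; exact (proj1 (H _ Hb)).
  - intros b [a Ha]; exact (proj2 (H _ Ha)).
Qed.

Definition prodCL : CompleteLattice :=
  {| carrier := A * B; le := prod_le; le_refl := prod_le_refl;
     le_trans := prod_le_trans; le_antisym := prod_le_antisym;
     sup := prod_sup; sup_ub := prod_sup_ub; sup_least := prod_sup_least |}.
End Prod.

Record OrdSet := {
  ord :> Type;
  olt : ord -> ord -> Prop;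
  olt_irrefl : forall a, ~ olt a a;
  olt_trans : forall a b c, olt a b -> olt b c -> olt a c;
  olt_total : forall a b, olt a b \/ a = b \/ olt b a;
  olt_wf : well_founded olt;
  otop : ord;
  otop_max : forall a, olt a otop \/ a = otop
}.

Arguments olt {o} _ _.

Section Ordinals.
Variable O : OrdSet.

Definition ole (a b : O) : Prop := olt a b \/ a = b.

Definition is_limit (l : O) : Prop :=
  (exists b, olt b l) /\ (forall b, olt b l -> exists c, olt b c /\ olt c l).

Definition liminf {L : CompleteLattice} (g : O -> L) (l : O) : L :=
  sup (fun x => exists a0, olt a0 l /\
         x = inf (fun y => exists a, ole a0 a /\ olt a l /\ y = g a)).

Definition limsup {L : CompleteLattice} (g : O -> L) (l : O) : L :=
  inf (fun x => exists a0, olt a0 l /\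
         x = sup (fun y => exists a, ole a0 a /\ olt a l /\ y = g a)).

Definition o_is_lub (S : O -> Prop) (u : O) : Prop :=
  (forall x, S x -> ole x u) /\ (forall v, (forall x, S x -> ole x v) -> ole u v).
Definition o_is_glb (S : O -> Prop) (u : O) : Prop :=
  (forall x, S x -> ole u x) /\ (forall v, (forall x, S x -> ole v x) -> ole v u).

Definition osup (S : O -> Prop) : O := epsilon (inhabits (otop O)) (o_is_lub S).
Definition oinf (S : O -> Prop) : O := epsilon (inhabits (otop O)) (o_is_glb S).

Definition oliminf (phi : O -> O) (l : O) : O :=
  osup (fun x => exists a0, olt a0 l /\
         x = oinf (fun y => exists a, ole a0 a /\ olt a l /\ y = phi a)).

(** * Transfinite iteration f^a(g):
      f^0 g = g, f^(b+1) g = f (f^b g), f^l g = limsup_{b -> l} f^b g *)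
Section Iter.
Variables (L : CompleteLattice) (f : L -> L) (g : L).

Definition iter_step (a : O) (rec : forall b : O, olt b a -> L) : L :=
  match excluded_middle_informative
          (exists b, olt b a /\ forall c, ~ (olt b c /\ olt c a)) with
  | left H =>
      let (b, Hb) := constructive_indefinite_description _ H in
      f (rec b (proj1 Hb))
  | right _ =>
      match excluded_middle_informative (exists b, olt b a) with
      | left _ =>
          inf (fun x => exists a0, olt a0 a /\
                 x = sup (fun y => exists b (Hb : olt b a),
                            ole a0 b /\ y = rec b Hb))
      | right _ => g
      end
  end.

Definition iter (a : O) : L := Fix (olt_wf O) (fun _ => carrier L) iter_step a.
End Iter.

Definition mu (a : O) {L : CompleteLattice} (f : L -> L) : L := @iter L f bot a.

Definition liminf_pullable {K K' : CompleteLattice} (F : O -> K -> K') : Prop :=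
  forall (G : O -> K) (l : O), is_limit l ->
    (forall c : O, le (F c (liminf G l)) (liminf (fun a => F c (G a)) l)) /\
    le (F l (liminf G l)) (liminf (fun a => F a (G a)) l).

End Ordinals.

Arguments ole {O} _ _.
Arguments is_limit {O} _.
Arguments liminf {O L} _ _.
Arguments limsup {O L} _ _.
Arguments osup {O} _.
Arguments oinf {O} _.
Arguments oliminf {O} _ _.
Arguments iter {O L} _ _ _.
Arguments mu {O} _ {L} _.
Arguments liminf_pullable {O K K'} _.

(** The stage [mu^a f] of a monotone [f] is increasing in [a] and continuous at
    limits ([mu^l f] is the supremum of the earlier stages).  Hence [a |-> mu^a f]
    maps the (attained) infimum of a set of ordinals to the infimum of the images
    and the supremum to the supremum, so it commutes with [liminf]: this is (2).
    For (1) one proves both pullability inequalities at once by induction on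
    [beta]: a successor stage [F (mu^p)] is handled by pulling [liminf] through
    both arguments of [F], a limit stage is a supremum of earlier stages, each of
    which lies below the [liminf] of the corresponding (larger) stages [mu^beta]. *)
From Stdlib Require Import Classical ClassicalEpsilon FunctionalExtensionality.

Lemma inf_lb (L : CompleteLattice) (S : L -> Prop) x : S x -> le (inf S) x.
Proof. intros Hx. apply sup_least. intros y Hy. exact (Hy x Hx). Qed.

Lemma inf_glb (L : CompleteLattice) (S : L -> Prop) y :
  (forall x, S x -> le y x) -> le y (inf S).
Proof. intros H. apply (sup_ub _ (fun y => forall x, S x -> le y x)). exact H. Qed.

Lemma bot_least (L : CompleteLattice) (x : L) : le bot x.
Proof. apply sup_least. intros y []. Qed.

Lemma sup_ext (L : CompleteLattice) (S S' : L -> Prop) :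
  (forall x, S x <-> S' x) -> sup S = sup S'.
Proof.
  intros H. apply le_antisym; apply sup_least; intros x Hx; apply sup_ub; apply H, Hx.
Qed.

Lemma inf_ext (L : CompleteLattice) (S S' : L -> Prop) :
  (forall x, S x <-> S' x) -> inf S = inf S'.
Proof.
  intros H. apply sup_ext. intros y; split; intros Hy x Hx; apply Hy, H, Hx.
Qed.

Lemma inf_prod (K L : CompleteLattice) (S : prodCL K L -> Prop) :
  inf S = (inf (fun a => exists b, S (a, b)), inf (fun b => exists a, S (a, b))).
Proof.
  unfold inf at 1. simpl. unfold prod_sup. f_equal; apply sup_ext; intros c; split.
  - intros [d Hd] x [z Hz]. exact (proj1 (Hd (x, z) Hz)).
  - intros Hc. exists bot. intros [x z] Hxz. split; simpl; [apply Hc; eauto|apply bot_least].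
  - intros [d Hd] z [x Hx]. exact (proj2 (Hd (x, z) Hx)).
  - intros Hc. exists bot. intros [x z] Hxz. split; simpl; [apply bot_least|apply Hc; eauto].
Qed.

Section Ordinals.
Variable O : OrdSet.

Lemma ole_refl (a : O) : ole a a.
Proof. right; reflexivity. Qed.

Lemma ole_antisym (a b : O) : ole a b -> ole b a -> a = b.
Proof.
  intros [H|H] [H'|H']; auto.
  exfalso; apply (olt_irrefl _ a); eapply olt_trans; eauto.
Qed.

Lemma ole_or_gt (a b : O) : ole a b \/ olt b a.
Proof. destruct (olt_total _ a b) as [H|[H|H]]; unfold ole; auto. Qed.

Lemma ord_least (S : O -> Prop) x :
  S x -> exists y, S y /\ forall z, S z -> ole y z.
Proof.
  intros Hx. apply NNPP; intros Hn. revert Hx.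
  induction x as [a IH] using (well_founded_ind (olt_wf O)). intros Ha.
  apply Hn. exists a. split; [exact Ha|]. intros z Hz.
  destruct (ole_or_gt a z) as [H|H]; [exact H|]. exfalso; exact (IH z H Hz).
Qed.

Lemma oinf_least (S : O -> Prop) x :
  S x -> S (oinf S) /\ forall z, S z -> ole (oinf S) z.
Proof.
  intros Hx. destruct (ord_least S x Hx) as [y [Hy Hmin]].
  assert (Hglb : o_is_glb O S (oinf S)) by (unfold oinf; apply epsilon_spec; exists y; split; auto).
  replace (oinf S) with y; [auto|].
  apply ole_antisym; [apply (proj2 Hglb); exact Hmin|apply (proj1 Hglb); exact Hy].
Qed.

Lemma osup_lub (S : O -> Prop) : o_is_lub O S (osup S).
Proof.
  unfold osup. apply epsilon_spec.
  destruct (ord_least (fun u => forall x, S x -> ole x u) (otop O)) as [u [Hu Hmin]].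
  { intros x _. destruct (otop_max _ x); unfold ole; auto. }
  exists u. split; auto.
Qed.

Lemma lt_osup_witness (S : O -> Prop) c :
  olt c (osup S) -> exists x, S x /\ olt c x.
Proof.
  intros Hc. apply NNPP; intros Hn.
  assert (Hle : ole (osup S) c).
  { apply (proj2 (osup_lub S)). intros x Hx.
    destruct (ole_or_gt x c) as [H|H]; [exact H|]. exfalso; apply Hn; eauto. }
  destruct Hle as [Hlt| <-]; [exact (olt_irrefl _ c (olt_trans _ _ _ _ Hc Hlt))|].
  exact (olt_irrefl _ _ Hc).
Qed.

Definition is_pred (p a : O) : Prop := olt p a /\ forall c, ~ (olt p c /\ olt c a).

Lemma is_pred_unique (p p' a : O) : is_pred p a -> is_pred p' a -> p = p'.
Proof.
  intros [H1 H2] [H1' H2'].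
  destruct (olt_total _ p p') as [H|[H|H]]; [exfalso; exact (H2 p' (conj H H1'))|exact H|].
  exfalso; exact (H2' p (conj H H1)).
Qed.

Lemma ord_cases (a : O) :
  (exists p, is_pred p a)
  \/ ((forall p, ~ is_pred p a) /\ exists b, olt b a)
  \/ (forall b, ~ olt b a).
Proof.
  destruct (classic (exists p, is_pred p a)) as [H|H]; [left; exact H|right].
  destruct (classic (exists b, olt b a)) as [H'|H']; [left|right].
  - split; [intros p Hp; apply H; eauto|exact H'].
  - intros b Hb; apply H'; eauto.
Qed.

Section Iteration.
Variables (L : CompleteLattice) (f : L -> L) (g : L).

Lemma iter_unfold (a : O) : iter f g a = iter_step O L f g a (fun b _ => iter f g b).
Proof.
  unfold iter. rewrite Fix_eq; [reflexivity|]. intros x r r' H.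
  replace r' with r; [reflexivity|].
  apply functional_extensionality_dep; intro y.
  apply functional_extensionality_dep; intro p. apply H.
Qed.

Lemma iter_succ (p a : O) : is_pred p a -> iter f g a = f (iter f g p).
Proof.
  intros Hp. rewrite iter_unfold. unfold iter_step.
  destruct (excluded_middle_informative _) as [H|H]; [|exfalso; apply H; exists p; exact Hp].
  destruct (constructive_indefinite_description _ H) as [b Hb].
  rewrite (is_pred_unique p b a Hp Hb). reflexivity.
Qed.

Lemma iter_lim (a : O) :
  (forall p, ~ is_pred p a) -> (exists b, olt b a) ->
  iter f g a = inf (fun x => exists a0, olt a0 a /\
     x = sup (fun y => exists b, olt b a /\ ole a0 b /\ y = iter f g b)).
Proof.
  intros Hnp Hex. rewrite iter_unfold. unfold iter_step.
  destruct (excluded_middle_informative _) as [H|_].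
  { exfalso. destruct H as [p Hp]. exact (Hnp p Hp). }
  destruct (excluded_middle_informative _) as [_|H']; [|contradiction].
  apply inf_ext. intros x; split; intros [a0 [Ha0 ->]]; exists a0; split; auto;
    apply sup_ext; intros y; split; intros [b [Hb [H1 H2]]]; eauto.
Qed.

Lemma iter_zero (a : O) : (forall b, ~ olt b a) -> iter f g a = g.
Proof.
  intros Hz. rewrite iter_unfold. unfold iter_step.
  destruct (excluded_middle_informative _) as [H|_].
  { exfalso. destruct H as [p [Hp _]]. exact (Hz p Hp). }
  destruct (excluded_middle_informative _) as [H|_]; [|reflexivity].
  exfalso. destruct H as [b Hb]. exact (Hz b Hb).
Qed.

End Iteration.

Lemma limsup_increasing (L : CompleteLattice) (g : O -> L) (l : O) :
  (forall a b, olt a b -> olt b l -> le (g a) (g b)) -> (exists b, olt b l) ->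
  inf (fun x => exists a0, olt a0 l /\
         x = sup (fun y => exists b, olt b l /\ ole a0 b /\ y = g b))
  = sup (fun y => exists c, olt c l /\ y = g c).
Proof.
  intros Hinc [b0 Hb0]. apply le_antisym.
  - eapply le_trans; [apply inf_lb; exists b0; split; [exact Hb0|reflexivity]|].
    apply sup_least. intros y [c [Hc [_ ->]]]. apply sup_ub. eauto.
  - apply inf_glb. intros x [a0 [Ha0 ->]]. apply sup_least. intros y [c [Hc ->]].
    destruct (ole_or_gt c a0) as [Hca|Hac].
    + eapply le_trans; [|apply sup_ub; exists a0; split; [exact Ha0|split; [apply ole_refl|reflexivity]]].
      destruct Hca as [Hca| ->]; [exact (Hinc c a0 Hca Ha0)|apply le_refl].
    + apply sup_ub. exists c. split; [exact Hc|split; [left; exact Hac|reflexivity]].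
Qed.

Section Stages.
Variables (L : CompleteLattice) (h : L -> L).
Hypothesis h_mono : monotone h.

Lemma mu_increasing (b : O) :
  le (mu b h) (h (mu b h)) /\ forall a, olt a b -> le (mu a h) (mu b h).
Proof.
  induction b as [b IH] using (well_founded_ind (olt_wf O)). unfold mu in *.
  destruct (ord_cases b) as [[p Hp]|[[Hnp Hex]|Hz]].
  - rewrite (iter_succ _ _ _ p b Hp). destruct (IH p (proj1 Hp)) as [Hp1 Hp2]. split.
    + apply h_mono, Hp1.
    + intros a Ha. destruct (olt_total _ a p) as [H|[->|H]].
      * eapply le_trans; [apply (Hp2 a H)|exact Hp1].
      * exact Hp1.
      * exfalso; exact (proj2 Hp a (conj H Ha)).
  - rewrite iter_lim, limsup_increasing by (auto; intros a c Hac Hc; apply (proj2 (IH c Hc)), Hac).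
    split.
    + apply sup_least. intros y [c [Hc ->]].
      eapply le_trans; [apply (proj1 (IH c Hc))|]. apply h_mono, sup_ub. eauto.
    + intros a Ha. apply sup_ub. eauto.
  - rewrite iter_zero by exact Hz. split; [apply bot_least|intros a Ha; exfalso; exact (Hz a Ha)].
Qed.

Lemma mu_mono (a b : O) : ole a b -> le (mu a h) (mu b h).
Proof. intros [H|<-]; [apply (proj2 (mu_increasing b)), H|apply le_refl]. Qed.

Lemma mu_lim (b : O) :
  (forall p, ~ is_pred p b) -> (exists c, olt c b) ->
  mu b h = sup (fun y => exists c, olt c b /\ y = mu c h).
Proof.
  intros Hnp Hex. unfold mu at 1. rewrite iter_lim by assumption.
  apply limsup_increasing; [|exact Hex]. intros a c Hac _. apply (proj2 (mu_increasing c)), Hac.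
Qed.

Lemma mu_oinf (S : O -> Prop) x :
  S x -> mu (oinf S) h = inf (fun y => exists z, S z /\ y = mu z h).
Proof.
  intros Hx. destruct (oinf_least S x Hx) as [Hin Hmin]. apply le_antisym.
  - apply inf_glb. intros y [z [Hz ->]]. apply mu_mono, Hmin, Hz.
  - apply inf_lb. eauto.
Qed.

Lemma mu_osup (S : O -> Prop) x :
  S x -> mu (osup S) h = sup (fun y => exists z, S z /\ y = mu z h).
Proof.
  intros Hx. destruct (osup_lub S) as [Hub Hleast]. apply le_antisym.
  2:{ apply sup_least. intros y [z [Hz ->]]. apply mu_mono, Hub, Hz. }
  destruct (classic (S (osup S))) as [Hin|Hout]; [apply sup_ub; eauto|].
  assert (Hlt : forall z, S z -> olt z (osup S)).
  { intros z Hz. destruct (Hub z Hz) as [H| ->]; [exact H|contradiction]. }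
  destruct (ord_cases (osup S)) as [[p Hp]|[[Hnp Hex]|Hz]].
  - exfalso. destruct (lt_osup_witness S p (proj1 Hp)) as [z [Hz Hpz]].
    exact (proj2 Hp z (conj Hpz (Hlt z Hz))).
  - rewrite (mu_lim _ Hnp Hex). apply sup_least. intros y [c [Hc ->]].
    destruct (lt_osup_witness S c Hc) as [z [Hz Hcz]].
    eapply le_trans; [apply mu_mono; left; exact Hcz|]. apply sup_ub. eauto.
  - exfalso. exact (Hz x (Hlt x Hx)).
Qed.

End Stages.

Lemma mu_oliminf (L : CompleteLattice) (f : L -> L) (phi : O -> O) (l : O) :
  monotone f -> is_limit l ->
  mu (oliminf phi l) f = liminf (fun a => mu (phi a) f) l.
Proof.
  intros Hf [[a00 Ha00] _]. unfold oliminf, liminf.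
  rewrite (mu_osup _ _ Hf _ _ (ex_intro _ a00 (conj Ha00 eq_refl))).
  apply sup_ext. intros y; split.
  - intros [z [[a0 [Ha0 ->]] ->]]. exists a0. split; [exact Ha0|].
    rewrite (mu_oinf _ _ Hf _ (phi a0)) by (exists a0; repeat split; auto using ole_refl).
    apply inf_ext. intros x; split.
    + intros [z [[a [H1 [H2 ->]]] ->]]. eauto.
    + intros [a [H1 [H2 ->]]]. exists (phi a). eauto.
  - intros [a0 [Ha0 ->]].
    exists (oinf (fun y => exists a, ole a0 a /\ olt a l /\ y = phi a)). split; [eauto|].
    rewrite (mu_oinf _ _ Hf _ (phi a0)) by (exists a0; repeat split; auto using ole_refl).
    apply inf_ext. intros x; split.
    + intros [a [H1 [H2 ->]]]. exists (phi a). eauto.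
    + intros [z [[a [H1 [H2 ->]]] ->]]. eauto.
Qed.

Lemma liminf_mono (L : CompleteLattice) (g1 g2 : O -> L) (l : O) :
  (forall a, le (g1 a) (g2 a)) -> le (liminf g1 l) (liminf g2 l).
Proof.
  intros H. apply sup_least. intros x [a0 [Ha0 ->]].
  eapply le_trans; [|apply sup_ub; exists a0; split; [exact Ha0|reflexivity]].
  apply inf_glb. intros y [a [H1 [H2 ->]]].
  eapply le_trans; [apply inf_lb; eauto|apply H].
Qed.

Lemma liminf_pair (K L : CompleteLattice) (G : O -> K) (X : O -> L) (l : O) :
  liminf (L := prodCL K L) (fun a => (G a, X a)) l = (liminf G l, liminf X l).
Proof.
  assert (Htail : forall a0,
    inf (L := prodCL K L) (fun y => exists a, ole a0 a /\ olt a l /\ y = (G a, X a))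
    = (inf (fun y => exists a, ole a0 a /\ olt a l /\ y = G a),
       inf (fun y => exists a, ole a0 a /\ olt a l /\ y = X a))).
  { intros a0. rewrite inf_prod. f_equal; apply inf_ext; intros y; split.
    - intros [z [a [H1 [H2 E]]]]. injection E as -> ->. eauto.
    - intros [a [H1 [H2 ->]]]. eauto.
    - intros [z [a [H1 [H2 E]]]]. injection E as -> ->. eauto.
    - intros [a [H1 [H2 ->]]]. eauto. }
  unfold liminf. cbn [sup prodCL]. unfold prod_sup.
  f_equal; apply sup_ext; intros y; split.
  - intros [z [a0 [Ha0 E]]]. rewrite Htail in E. injection E as -> ->. eauto.
  - intros [a0 [Ha0 ->]]. eexists; exists a0; split; [exact Ha0|]. rewrite Htail; reflexivity.
  - intros [z [a0 [Ha0 E]]]. rewrite Htail in E. injection E as -> ->. eauto.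
  - intros [a0 [Ha0 ->]]. eexists; exists a0; split; [exact Ha0|]. rewrite Htail; reflexivity.
Qed.

Section Pullable.
Variables (K L : CompleteLattice) (F : O -> K -> L -> L).
Hypothesis F_mono : forall (a : O) (G : K), monotone (F a G).

(** [idx] is constant for the first pullability inequality, the identity for the second. *)
Lemma mu_pull_le (idx : O -> O) (t : O) (G : O -> K) (l : O) :
  (forall X : O -> L,
     le (F t (liminf G l) (liminf X l)) (liminf (fun a => F (idx a) (G a) (X a)) l)) ->
  forall beta : O,
    le (mu beta (F t (liminf G l))) (liminf (fun a => mu beta (F (idx a) (G a))) l).
Proof.
  intros Hstep beta. induction beta as [beta IH] using (well_founded_ind (olt_wf O)).
  destruct (ord_cases beta) as [[p Hp]|[[Hnp Hex]|Hz]].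
  - assert (Hsucc : forall h : L -> L, mu beta h = h (mu p h))
      by (intro h; apply iter_succ, Hp).
    rewrite Hsucc.
    replace (fun a => mu beta (F (idx a) (G a)))
      with (fun a => F (idx a) (G a) (mu p (F (idx a) (G a))))
      by (apply functional_extensionality; intro a; symmetry; apply Hsucc).
    eapply le_trans; [apply F_mono, (IH p (proj1 Hp))|apply Hstep].
  - rewrite (mu_lim _ _ (F_mono _ _) _ Hnp Hex). apply sup_least. intros y [b [Hb ->]].
    eapply le_trans; [apply (IH b Hb)|].
    apply liminf_mono. intro a. apply mu_mono; [apply F_mono|left; exact Hb].
  - unfold mu at 1. rewrite iter_zero by exact Hz. apply bot_least.
Qed.

Hypothesis F_pull :
  liminf_pullable (K := prodCL K L) (K' := L)
    (fun (a : O) (GX : prodCL K L) => F a (fst GX) (snd GX)).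

Lemma liminf_pullable_pair (G : O -> K) (X : O -> L) (l : O) :
  is_limit l ->
  (forall c, le (F c (liminf G l) (liminf X l)) (liminf (fun a => F c (G a) (X a)) l))
  /\ le (F l (liminf G l) (liminf X l)) (liminf (fun a => F a (G a) (X a)) l).
Proof.
  intros Hl. destruct (F_pull (fun a => (G a, X a) : prodCL K L) l Hl) as [Hc Hl'].
  cbv beta in Hc, Hl'. rewrite liminf_pair in Hc, Hl'. exact (conj Hc Hl').
Qed.

Lemma mu_liminf_pullable (beta : O) :
  liminf_pullable (K := K) (K' := L) (fun a G => mu beta (F a G)).
Proof.
  intros G l Hl. split; [intro c|].
  - apply (mu_pull_le (fun _ => c)). intros X. apply (liminf_pullable_pair G X l Hl).
  - apply (mu_pull_le (fun a => a)). intros X. apply (liminf_pullable_pair G X l Hl).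
Qed.

End Pullable.

End Ordinals.

Theorem lemma4p17 (O : OrdSet) (K L : CompleteLattice)
  (F : O -> K -> L -> L)
  (Fmono : forall (a : O) (G : K), monotone (F a G))
  (Fpull : liminf_pullable (K := prodCL K L) (K' := L)
             (fun (a : O) (GX : prodCL K L) => F a (fst GX) (snd GX))) :
  (forall beta : O,
      liminf_pullable (K := K) (K' := L) (fun (a : O) (G : K) => mu beta (F a G)))
  /\
  (forall (f : L -> L), monotone f ->
   forall (phi : O -> O) (l : O), is_limit l ->
     mu (oliminf phi l) f = liminf (fun a : O => mu (phi a) f) l).
Proof.
  split.
  - exact (mu_liminf_pullable O K L F Fmono Fpull).
  - intros f Hf phi l Hl. exact (mu_oliminf O L f phi l Hf Hl).
Qed.
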